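(* Let $d=1$. There is a constant $c_1$ depending only on the dimension such that for all $N\ge1$, $$E_Q\left((Z(N)-1)^2\right)\le\sum_{n=1}^N\left(c_1c^2_{N,1}N^{1/2}\right)^n.$$
   Context: $P^N_0$ is the uniform probability measure on nearest-neighbour walks $\omega:\{0,\dots,N\}\to\mathbb{Z}$ with $\omega(0)=0$, $|\omega(n)-\omega(n-1)|=1$. The environment $h=\{h(n,x):n\in\mathbb{N},x\in\mathbb{Z}\}$ is i.i.d. with $h(n,x)=\pm1$ each with probability $1/2$ on $(H,\mathcal{G},Q)$, independent of the walk; $E_Q$ is expectation under $Q$. $(c_{N,1})$ is a sequence of positive numbers with $\lim_{N\to\infty}c_{N,1}^2N^{1/2}=0$. $Z(N)=\int\prod_{n=1}^N[1+c_{N,1}h(n,\omega(n))]\,dP^N_0(\omega)$. *)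

From HB Require Import structures.
From mathcomp Require Import all_boot all_order all_algebra.
From mathcomp Require Import all_classical all_reals all_analysis.
Set Implicit Arguments. Unset Strict Implicit. Unset Printing Implicit Defensive.
Import Order.TTheory GRing.Theory Num.Theory.
Local Open Scope ring_scope.

Definition avg (R : realType) (T : finType) (f : T -> R) : R :=
  (#|T|%:R)^-1 * \sum_(t : T) f t.

(* A nearest-neighbour walk of length N started at 0 is encoded by its N steps
   (true = +1, false = -1); the uniform measure P^N_0 is the uniform measure
   on these step sequences. *)
Definition steps (N : nat) := {ffun 'I_N -> bool}.

Definition walk_pos (N : nat) (s : steps N) (n : nat) : int :=
  \sum_(i < N | (i < n)%N) (if s i then 1 else -1).

(* The environment restricted to the box {1..N} x {-N..N}, which contains all
   sites (n, omega(n)) visited by walks of length N; time n (1<=n<=N) is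
   encoded by the ordinal n-1 and position x by x+N. true = +1, false = -1.
   Under Q these (N*(2N+1)) variables are i.i.d. uniform on {+1,-1}, i.e. the
   joint law is uniform on this finite type. *)
Definition env (N : nat) := {ffun 'I_N * 'I_(N.*2).+1 -> bool}.

Definition sgnb (R : realType) (b : bool) : R := if b then 1 else -1.

Definition hval (R : realType) (N : nat) (h : env N) (i : 'I_N) (x : int) : R :=
  sgnb R (h (i, inord (absz (x + (N%:Z))))).

Definition Zpart (R : realType) (N : nat) (c : R) (h : env N) : R :=
  avg (fun s : steps N =>
         \prod_(i < N) (1 + c * hval R h i (walk_pos s i.+1))).

From HB Require Import structures.
From mathcomp Require Import all_boot all_order all_algebra.
From mathcomp Require Import all_classical all_reals all_analysis.
From mathcomp Require Import ring lra.
Import Order.TTheory GRing.Theory Num.Theory.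
Import numFieldNormedType.Exports.
Local Open Scope classical_set_scope.
Local Open Scope ring_scope.
Set Implicit Arguments. Unset Strict Implicit.

(* Averaging over the environment first, E_Q Z = 1 and E_Q Z^2 is the
   expectation, over two independent walks, of prod_(n <= N) (1 + c^2 [D n = 0])
   where D is the difference of the walks.  Expanding this product along the
   Markov property of D gives E_Q Z^2 - 1 <= L_N * a * sum_(k < N) (a B)^k with
   a = c^2 and B a bound on the expected local time L_j of D at 0 up to any
   time j <= N.  As |D| is subharmonic with a defect at 0, L_j <= E|D_j| + 1,
   and E|D_j| <= (E D_j^2 + N) / (2 sqrt N) <= 3/2 sqrt N, so B = 3 sqrt N. *)

Definition fcons m (b : bool) (y : steps m) : steps m.+1 :=
  [ffun i : 'I_m.+1 => if unlift ord0 i is Some j then y j else b].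

Lemma fcons0 m b (y : steps m) : fcons b y ord0 = b.
Proof. by rewrite ffunE unlift_none. Qed.

Lemma fconsS m b (y : steps m) j : fcons b y (lift ord0 j) = y j.
Proof. by rewrite ffunE liftK. Qed.

Lemma card_steps m : #|steps m| = (2 ^ m)%N.
Proof. by rewrite card_ffun card_bool card_ord. Qed.

Lemma sum_steps_S (R : realType) m (F : steps m.+1 -> R) :
  \sum_(s : steps m.+1) F s = \sum_(b : bool) \sum_(y : steps m) F (fcons b y).
Proof.
rewrite pair_big /= (reindex (fun p : bool * steps m => fcons p.1 p.2)) //=.
exists (fun s => (s ord0, [ffun j => s (lift ord0 j)])) => [[b y] _ | s _] /=.
  by rewrite fcons0; congr pair; apply/ffunP => j; rewrite ffunE fconsS.
apply/ffunP => i; rewrite ffunE.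
by case: (unliftP ord0 i) => [j ->|->]; rewrite ?ffunE.
Qed.

Lemma walk_pos0 m (s : steps m) : walk_pos s 0 = 0.
Proof. by rewrite /walk_pos big_pred0. Qed.

Lemma walk_posS m b (y : steps m) n :
  walk_pos (fcons b y) n.+1 = (if b then 1 else -1) + walk_pos y n.
Proof.
rewrite /walk_pos big_mkcond big_ord_recl /= fcons0; congr (_ + _).
by rewrite [RHS]big_mkcond; apply: eq_bigr => j _; rewrite fconsS.
Qed.

Lemma walk_pos_bound m (s : steps m) n : `|walk_pos s n| <= m%:Z.
Proof.
apply: le_trans (ler_norm_sum _ _ _) _.
rewrite (eq_bigr (fun _ => 1)) => [|i _]; last by case: (s i).
rewrite sumr_const natz lez_nat.
by have := max_card (fun i : 'I_m => (i < n)%N); rewrite card_ord.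
Qed.

Section Average.
Variable R : realType.
Implicit Types T U : finType.

Lemma avgD T (f g : T -> R) : avg (fun t => f t + g t) = avg f + avg g.
Proof. by rewrite /avg big_split mulrDr. Qed.

Lemma avgZ T k (f : T -> R) : avg (fun t => k * f t) = k * avg f.
Proof. by rewrite /avg -mulr_sumr mulrCA. Qed.

Lemma avg_cst T (k : R) : (0 < #|T|)%N -> avg (fun _ : T => k) = k.
Proof.
move=> T_gt0; rewrite /avg sumr_const -[k *+ _]mulr_natr mulrCA mulVf ?mulr1 //.
by rewrite pnatr_eq0 -lt0n.
Qed.

Lemma ler_avg T (f g : T -> R) : (forall t, f t <= g t) -> avg f <= avg g.
Proof.
by move=> le_fg; rewrite ler_wpM2l ?invr_ge0 // ler_sum.
Qed.

Lemma avg_swap T U (F : T -> U -> R) :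
  avg (fun t => avg (fun u => F t u)) = avg (fun u => avg (fun t => F t u)).
Proof. by rewrite /avg -!mulr_sumr exchange_big /= mulrCA. Qed.

Lemma avgM T U (f : T -> R) (g : U -> R) :
  avg f * avg g = avg (fun t => avg (fun u => f t * g u)).
Proof.
rewrite /avg; under [in RHS]eq_bigr do rewrite -mulr_sumr mulrCA.
by rewrite -mulr_suml -mulrA.
Qed.

Lemma avg_steps_S m (F : steps m.+1 -> R) :
  avg F = (avg (fun y => F (fcons true y)) + avg (fun y => F (fcons false y))) / 2.
Proof.
rewrite /avg sum_steps_S big_bool /= !card_steps expnS natrM natrX.
by field; rewrite expf_neq0.
Qed.

End Average.

Definition walk_diff m (s s' : steps m) n : int := walk_pos s n - walk_pos s' n.

Lemma walk_diff0 m (s s' : steps m) : walk_diff s s' 0 = 0.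
Proof. by rewrite /walk_diff !walk_pos0 subrr. Qed.

Lemma walk_diffS m b b' (y y' : steps m) n :
  walk_diff (fcons b y) (fcons b' y') n.+1 =
  ((if b then 1 else -1) - (if b' then 1 else -1)) + walk_diff y y' n.
Proof. by rewrite /walk_diff !walk_posS opprD addrACA. Qed.

Definition pcons (d : int) (p : nat -> int) (n : nat) : int :=
  if n is k.+1 then p k else d.

Section PathAverage.
Variable R : realType.
Implicit Types (G H : (nat -> int) -> R) (f : int -> R).

Definition path_avg m G (d : int) : R :=
  avg (fun s : steps m => avg (fun s' : steps m => G (fun n => d + walk_diff s s' n))).

(* The difference of two independent walks moves by 0, +2, -2 with
   probabilities 1/2, 1/4, 1/4. *)
Definition diff_step f (d : int) : R := (2 * f d + f (d + 2) + f (d - 2)) / 4.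

Lemma eq_path_avg m G H d :
  (forall p, G p = H p) -> path_avg m G d = path_avg m H d.
Proof. by move=> eq_GH; congr path_avg; apply: funext. Qed.

Lemma path_avgD m G H d :
  path_avg m (fun p => G p + H p) d = path_avg m G d + path_avg m H d.
Proof. by rewrite /path_avg -avgD; congr avg; apply: funext => s; apply: avgD. Qed.

Lemma path_avgZ m k G d :
  path_avg m (fun p => k * G p) d = k * path_avg m G d.
Proof. by rewrite /path_avg -avgZ; congr avg; apply: funext => s; apply: avgZ. Qed.

Lemma path_avg_cst m k d : path_avg m (fun _ => k) d = k.
Proof. by rewrite /path_avg !avg_cst // card_steps expn_gt0. Qed.

Lemma ler_path_avg m G H d :
  (forall p, G p <= H p) -> path_avg m G d <= path_avg m H d.
Proof. by move=> le_GH; apply: ler_avg => s; apply: ler_avg. Qed.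

Lemma path_avg_head m (F : int -> (nat -> int) -> R) d :
  path_avg m (fun p => F (p 0%N) p) d = path_avg m (F d) d.
Proof.
congr avg; apply: funext => s; congr avg; apply: funext => s'.
by rewrite walk_diff0 addr0.
Qed.

Lemma path_avg_S m G d :
  path_avg m.+1 G d = diff_step (path_avg m (fun p => G (pcons d p))) d.
Proof.
have step b b' : avg (fun y : steps m => avg (fun y' : steps m =>
      G (fun n => d + walk_diff (fcons b y) (fcons b' y') n))) =
    path_avg m (fun p => G (pcons d p))
      (d + ((if b then 1 else -1) - (if b' then 1 else -1))).
  congr avg; apply: funext => y; congr avg; apply: funext => y'; congr G.
  by apply: funext => -[|n] /=; rewrite ?walk_diff0 ?addr0 // walk_diffS addrA.
rewrite {1}/path_avg avg_steps_S.
under eq_fun do rewrite avg_steps_S mulrC.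
under [in X in _ + X]eq_fun do rewrite avg_steps_S mulrC.
rewrite !avgZ !avgD !step /diff_step subrr.
have -> : (1 - -1 : int) = 2 by [].
have -> : (-1 - 1 : int) = -2 by [].
by rewrite addr0; field.
Qed.

Definition indic0 (x : int) : R := (x == 0)%:R.

Definition visits m d := path_avg m (fun p => \sum_(i < m) indic0 (p i.+1)) d.
Definition visits_pre m d := path_avg m (fun p => \sum_(i < m) indic0 (p i)) d.
Definition mean_abs m d := path_avg m (fun p => `|(p m)%:~R : R|) d.
Definition mean_sq m d := path_avg m (fun p => ((p m)%:~R : R) ^+ 2) d.
Definition overlap a m d :=
  path_avg m (fun p => \prod_(i < m) (1 + a * indic0 (p i.+1))) d.

Lemma visits0 d : visits 0 d = 0.
Proof.
rewrite /visits (@eq_path_avg _ _ (fun _ => 0)) ?path_avg_cst // => p.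
exact: big_ord0.
Qed.

Lemma visits_pre0 d : visits_pre 0 d = 0.
Proof.
rewrite /visits_pre (@eq_path_avg _ _ (fun _ => 0)) ?path_avg_cst // => p.
exact: big_ord0.
Qed.

Lemma overlap0 a d : overlap a 0 d = 1.
Proof.
rewrite /overlap (@eq_path_avg _ _ (fun _ => 1)) ?path_avg_cst // => p.
exact: big_ord0.
Qed.

Lemma mean_abs0 d : mean_abs 0 d = `|d%:~R|.
Proof. by rewrite /mean_abs (@path_avg_head _ (fun y _ => `|y%:~R|)) path_avg_cst. Qed.

Lemma mean_sq0 d : mean_sq 0 d = d%:~R ^+ 2.
Proof. by rewrite /mean_sq (@path_avg_head _ (fun y _ => y%:~R ^+ 2)) path_avg_cst. Qed.

Lemma visitsS m d : visits m.+1 d = diff_step (fun x => indic0 x + visits m x) d.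
Proof.
rewrite /visits path_avg_S; congr diff_step; apply: funext => x.
rewrite (@eq_path_avg _ _ (fun p => indic0 (p 0%N) + \sum_(i < m) indic0 (p i.+1))).
  by rewrite (@path_avg_head _ (fun y p => indic0 y + _)) path_avgD path_avg_cst.
by move=> p; rewrite big_ord_recl.
Qed.

Lemma visits_preS m d :
  visits_pre m.+1 d = indic0 d + diff_step (visits_pre m) d.
Proof.
transitivity (diff_step (fun x => indic0 d + visits_pre m x) d).
  rewrite /visits_pre path_avg_S; congr diff_step; apply: funext => x.
  rewrite (@eq_path_avg _ _ (fun p => indic0 d + \sum_(i < m) indic0 (p i))).
    by rewrite path_avgD path_avg_cst.
  by move=> p; rewrite big_ord_recl.
by rewrite /diff_step; field.
Qed.

Lemma mean_absS m d : mean_abs m.+1 d = diff_step (mean_abs m) d.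
Proof. by rewrite /mean_abs path_avg_S. Qed.

Lemma mean_sqS m d : mean_sq m.+1 d = diff_step (mean_sq m) d.
Proof. by rewrite /mean_sq path_avg_S. Qed.

Lemma overlapS a m d :
  overlap a m.+1 d = diff_step (fun x => (1 + a * indic0 x) * overlap a m x) d.
Proof.
rewrite /overlap path_avg_S; congr diff_step; apply: funext => x.
rewrite (@eq_path_avg _ _ (fun p => (1 + a * indic0 (p 0%N)) *
                                   \prod_(i < m) (1 + a * indic0 (p i.+1)))).
  by rewrite (@path_avg_head _ (fun y p => (1 + a * indic0 y) * _)) path_avgZ.
by move=> p; rewrite big_ord_recl.
Qed.

End PathAverage.

Lemma sum_shift_le (R : realType) (f : nat -> R) m :
  (forall n, 0 <= f n <= 1) -> \sum_(i < m) f i.+1 <= \sum_(i < m) f i + 1.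
Proof.
move=> f01; have shift : f 0%N + \sum_(i < m) f i.+1 = \sum_(i < m) f i + f m.
  by rewrite -(big_ord_recr m f) big_ord_recl.
by have := f01 0%N; have := f01 m; lra.
Qed.

Section DiffWalkBounds.
Variable R : realType.

Lemma indic0_01 x : 0 <= indic0 R x <= 1.
Proof. by rewrite /indic0; case: (x == 0); rewrite /= ?lexx ?ler01. Qed.

Lemma visits_ge0 m d : 0 <= visits R m d.
Proof.
rewrite -[0](path_avg_cst m (0 : R) d) /visits; apply: ler_path_avg => p.
by apply: sumr_ge0 => i _; case/andP: (indic0_01 (p i.+1)).
Qed.

Lemma visits_le_pre m d : visits R m d <= visits_pre R m d + 1.
Proof.
rewrite /visits /visits_pre -[1](path_avg_cst m (1 : R) d) -path_avgD.
apply: ler_path_avg => p.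
by apply: (@sum_shift_le R (fun n => indic0 R (p n))) => n; apply: indic0_01.
Qed.

Lemma mean_sq_eq m d : mean_sq R m d = d%:~R ^+ 2 + 2 * m%:R :> R.
Proof.
elim: m d => [|m IH] d; first by rewrite mean_sq0 mulr0 addr0.
have int2 : (2%:~R : R) = 2 by [].
by rewrite mean_sqS /diff_step !IH !intrD intrN int2 -addn1 natrD; field.
Qed.

Lemma mean_abs_le m d (l : R) :
  0 <= l -> 2 * l * mean_abs R m d <= mean_sq R m d + l ^+ 2.
Proof.
move=> l_ge0; rewrite /mean_abs /mean_sq -path_avgZ -[l ^+ 2](path_avg_cst m _ d).
rewrite -path_avgD; apply: ler_path_avg => p.
rewrite -real_normK ?num_real //; have := sqr_ge0 (`|(p m)%:~R : R| - l); nra.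
Qed.

Lemma norm_le_diff_step d :
  `|d%:~R : R| + indic0 R d <= diff_step (fun x => `|x%:~R : R|) d.
Proof.
rewrite /diff_step /indic0; have [->|d_neq0] := eqVneq d 0.
  by rewrite /= add0r sub0r normrN normr0 ger0_norm //; lra.
have int2 : (2%:~R : R) = 2 by [].
rewrite /= addr0 !intrD intrN int2.
have : `|(d%:~R : R) *+ 2| <= `|d%:~R + 2| + `|d%:~R - 2|.
  have -> : (d%:~R : R) *+ 2 = (d%:~R + 2) + (d%:~R - 2) by rewrite mulr2n; ring.
  exact: ler_normD.
by rewrite normrMn; lra.
Qed.

Lemma mean_abs_ge m d : `|d%:~R| + visits_pre R m d <= mean_abs R m d.
Proof.
elim: m d => [|m IH] d; first by rewrite visits_pre0 mean_abs0 addr0.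
rewrite visits_preS mean_absS.
have := IH d; have := IH (d + 2); have := IH (d - 2); have := norm_le_diff_step d.
by rewrite /diff_step; lra.
Qed.

Lemma visits_le_sqrt N j :
  (0 < N)%N -> (j <= N)%N -> visits R j 0 <= 3 * Num.sqrt (N%:R : R).
Proof.
move=> N_gt0 le_jN; set l := Num.sqrt (N%:R : R).
have l2 : l ^+ 2 = N%:R by rewrite sqr_sqrtr // ler0n.
have N_ge1 : (1 : R) <= N%:R by rewrite ler1n.
have l_ge1 : 1 <= l by rewrite -sqrtr1 ler_sqrt.
have j_leN : (j%:R : R) <= N%:R by rewrite ler_nat.
have := mean_abs_le j 0 (le_trans ler01 l_ge1).
have := mean_abs_ge j 0; have := visits_le_pre j 0.
rewrite mean_sq_eq normr0 add0r expr0n /= add0r => le_visits le_abs_ge le_abs_le.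
nra.
Qed.

End DiffWalkBounds.

Section OverlapBound.
Variables (R : realType) (a B : R) (M : nat).
Hypotheses (a_ge0 : 0 <= a) (B_ge0 : 0 <= B)
  (visits_le : forall j, (j < M)%N -> visits R j 0 <= B).

Definition overlap_coef m := a * \sum_(k < m) (a * B) ^+ k.

Lemma overlap_coefS m : overlap_coef m.+1 = a + a * B * overlap_coef m.
Proof.
rewrite /overlap_coef big_ord_recl expr0 mulrDr mulr1 !mulr_sumr; congr (_ + _).
by apply: eq_bigr => i _; rewrite exprS; ring.
Qed.

Lemma overlap_coef_ge0 m : 0 <= overlap_coef m.
Proof. by rewrite mulr_ge0 // sumr_ge0 // => k _; rewrite exprn_ge0 // mulr_ge0. Qed.

Lemma overlap_coef_leS m : overlap_coef m <= overlap_coef m.+1.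
Proof.
by rewrite ler_wpM2l // big_ord_recr /= lerDl exprn_ge0 // mulr_ge0.
Qed.

Lemma overlap_sub1_le m : (m <= M)%N ->
  forall d, overlap a m d - 1 <= visits R m d * overlap_coef m.
Proof.
elim: m => [|m IH] le_mM d; first by rewrite overlap0 visits0 subrr mul0r.
have {}IH := IH (ltnW le_mM).
have le_coef y : visits R m y * overlap_coef m <= visits R m y * overlap_coef m.+1.
  by rewrite ler_wpM2l ?visits_ge0 ?overlap_coef_leS.
have step x : (1 + a * indic0 R x) * overlap a m x - 1
              <= (indic0 R x + visits R m x) * overlap_coef m.+1.
  have := IH x; have := le_coef x; rewrite /indic0.
  have [->|x_neq0] := eqVneq x 0; last by rewrite mulr0 addr0 mul1r add0r; lra.
  have le_UB : a * (visits R m 0 * overlap_coef m) <= a * (B * overlap_coef m).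
    by rewrite ler_wpM2l // ler_wpM2r ?overlap_coef_ge0 ?visits_le.
  have le_aV : a * overlap a m 0 <= a * (1 + visits R m 0 * overlap_coef m).
    by rewrite ler_wpM2l //; have := IH 0; lra.
  by rewrite overlap_coefS mulr1n mulr1; lra.
rewrite overlapS visitsS.
have := step d; have := step (d + 2); have := step (d - 2).
by rewrite /diff_step; lra.
Qed.

End OverlapBound.

Section Environment.
Variable R : realType.

(* E_Q[(1 + c h)^n] for a symmetric sign h. *)
Definition env_moment (c : R) (n : nat) : R := ((1 + c) ^+ n + (1 - c) ^+ n) / 2.

Lemma env_moment_bool c (b : bool) : env_moment c b = 1.
Proof. by rewrite /env_moment; case: b; rewrite ?expr1 ?expr0; field. Qed.

Lemma avg_prod_env N (c : R) (e : 'I_N -> 'I_(N.*2).+1 -> nat) :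
  avg (fun h : env N => \prod_(i < N) \prod_(x < (N.*2).+1)
        (1 + c * sgnb R (h (i, x))) ^+ e i x)
  = \prod_(i < N) \prod_(x < (N.*2).+1) env_moment c (e i x).
Proof.
pose G (k : 'I_N * 'I_(N.*2).+1) (b : bool) := (1 + c * sgnb R b) ^+ e k.1 k.2.
have prod_site h : \prod_(i < N) \prod_(x < (N.*2).+1)
    (1 + c * sgnb R (h (i, x))) ^+ e i x = \prod_k G k (h k).
  by rewrite pair_big; apply: eq_bigr => -[i x].
have sum_bool k : \sum_(b : bool) G k b = 2 * env_moment c (e k.1 k.2).
  by rewrite big_bool /G /env_moment /sgnb /= mulr1 mulrN1 [2 * _]mulrC divfK.
rewrite /avg; under eq_bigr do rewrite prod_site.
rewrite -bigA_distr_bigA /=; under eq_bigr do rewrite sum_bool.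
rewrite big_split /= prodr_const card_ffun card_bool natrX.
rewrite mulrA mulVf ?mul1r ?expf_neq0 //.
by rewrite pair_big.
Qed.

Lemma prod_env_moment_pair M (c : R) (p q : 'I_M) :
  \prod_(x < M) env_moment c ((x == p) + (x == q))%N = 1 + c ^+ 2 * (p == q)%:R.
Proof.
rewrite (bigD1 p) //= eqxx big1 ?mulr1 => [|x /negPf ->]; last first.
  by rewrite env_moment_bool.
by case: eqP => _; rewrite /env_moment /=; field.
Qed.

End Environment.

Lemma prod_pow_eq (R : realType) M (f : 'I_M -> R) p :
  \prod_(x < M) f x ^+ (x == p) = f p.
Proof.
rewrite (bigD1 p) //= eqxx expr1 big1 ?mulr1 // => x /negPf ->.
by rewrite expr0.
Qed.

Section PartitionFunction.
Variable R : realType.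

Definition site N (s : steps N) (i : 'I_N) : 'I_(N.*2).+1 :=
  inord (absz (walk_pos s i.+1 + N%:Z)).

Lemma site_eq N (s s' : steps N) i :
  (site s i == site s' i) = (walk_pos s i.+1 == walk_pos s' i.+1).
Proof.
have shift_in_box (w : int) : `|w| <= N%:Z ->
    (0 <= w + N%:Z) && (absz (w + N%:Z)%R < (N.*2).+1)%N.
  rewrite ler_norml => /andP [w_geN w_leN].
  have w_ge0 : 0 <= w + N%:Z by lra.
  by rewrite w_ge0 /= -ltz_nat abszE ger0_norm // -addn1 -muln2 PoszD PoszM; lra.
have /andP [s_ge0 s_lt] := shift_in_box _ (walk_pos_bound s i.+1).
have /andP [s'_ge0 s'_lt] := shift_in_box _ (walk_pos_bound s' i.+1).
rewrite /site -val_eqE /= !inordK // -eqz_nat !abszE !ger0_norm //.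
by apply/eqP/eqP => [/addIr|->].
Qed.

Lemma Zpart_site N (c : R) (h : env N) : Zpart c h =
  avg (fun s : steps N => \prod_(i < N) \prod_(x < (N.*2).+1)
        (1 + c * sgnb R (h (i, x))) ^+ (x == site s i)).
Proof.
rewrite /Zpart; congr avg; apply: funext => s; apply: eq_bigr => i _.
by rewrite prod_pow_eq.
Qed.

Lemma avg_Zpart N (c : R) : avg (fun h : env N => Zpart c h) = 1.
Proof.
under eq_fun do rewrite Zpart_site.
rewrite avg_swap; under eq_fun do rewrite avg_prod_env.
under eq_fun do under eq_bigr do under eq_bigr do rewrite env_moment_bool.
under eq_fun do under eq_bigr do rewrite big1 //.
by rewrite avg_cst ?big1 // card_steps expn_gt0.
Qed.

Lemma avg_Zpart_sqr N (c : R) :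
  avg (fun h : env N => Zpart c h ^+ 2) = overlap (c ^+ 2) N 0.
Proof.
under eq_fun do rewrite expr2 Zpart_site avgM.
rewrite avg_swap; under eq_fun do rewrite avg_swap.
congr avg; apply: funext => s; congr avg; apply: funext => s'.
under eq_fun do rewrite -big_split /=.
under eq_fun do under eq_bigr do rewrite -big_split /=.
under eq_fun do under eq_bigr do under eq_bigr do rewrite -exprD.
rewrite avg_prod_env; apply: eq_bigr => i _.
by rewrite prod_env_moment_pair site_eq /indic0 /walk_diff add0r subr_eq0.
Qed.

Lemma avg_Zpart_sub1_sqr N (c : R) :
  avg (fun h : env N => (Zpart c h - 1) ^+ 2) = overlap (c ^+ 2) N 0 - 1.
Proof.
have expand (h : env N) : (Zpart c h - 1) ^+ 2 = Zpart c h ^+ 2 + (-2 * Zpart c h + 1).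
  by ring.
rewrite (eq_fun expand) !avgD avgZ avg_Zpart avg_Zpart_sqr avg_cst; last first.
  by apply/card_gt0P; exists [ffun => true].
by ring.
Qed.

End PartitionFunction.

Lemma sum_pow_shift (R : realType) (x : R) n :
  \sum_(1 <= k < n.+1) x ^+ k = x * \sum_(k < n) x ^+ k.
Proof.
by rewrite big_add1 /= big_mkord mulr_sumr; apply: eq_bigr => k _; rewrite exprS.
Qed.

Unset Implicit Arguments. Set Strict Implicit.

Theorem lemma12 (R : realType) :
  exists c1 : R,
  forall c : nat -> R,
    (forall N : nat, (0 < N)%N -> 0 < c N) ->
    (fun N : nat => c N ^+ 2 * Num.sqrt (N%:R : R)) @ \oo --> (0 : R) ->
    forall N : nat, (1 <= N)%N ->
      @avg R _ (fun h : env N => (@Zpart R N (c N) h - 1) ^+ 2)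
      <= \sum_(1 <= n < N.+1) (c1 * c N ^+ 2 * Num.sqrt (N%:R : R)) ^+ n.
Proof.
exists 3 => c _ _ N N_gt0.
set a := c N ^+ 2; set B := 3 * Num.sqrt (N%:R : R).
have a_ge0 : 0 <= a by apply: sqr_ge0.
have B_ge0 : 0 <= B by rewrite mulr_ge0 ?sqrtr_ge0.
have visits_le j : (j <= N)%N -> visits R j 0 <= B by apply: visits_le_sqrt.
have visits_lt j (lt_jN : (j < N)%N) := visits_le j (ltnW lt_jN).
rewrite avg_Zpart_sub1_sqr.
apply: le_trans (overlap_sub1_le a_ge0 B_ge0 visits_lt (leqnn N) 0) _.
have -> : 3 * a * Num.sqrt (N%:R : R) = a * B by rewrite /B; ring.
rewrite sum_pow_shift.
have -> : a * B * \sum_(k < N) (a * B) ^+ k = B * overlap_coef a B N.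
  by rewrite /overlap_coef; ring.
by rewrite ler_wpM2r ?visits_le // (overlap_coef_ge0 a_ge0 B_ge0).
Qed.
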